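(* Let $\gamma>0$, $\tau\ge 1$, and let $\xi$ be an irrational number with continued fraction expansion $\xi=[a_0;a_1,a_2,\dots]$, convergents $p_k/q_k=[a_0;a_1,\dots,a_k]$ (in lowest terms, $q_k\ge 1$), and complete quotients $a'_k:=[a_k;a_{k+1},a_{k+2},\dots]$. Then $\xi\in D_{\gamma,\tau}$ if and only if $$\frac{q_{k+1}}{q_k^{\tau}}+\frac{1}{a'_{k+2}\,q_k^{\tau-1}}\le\frac1\gamma\qquad\text{for all }k\ge 0.$$
   Context: For $\gamma>0$ and $\tau\ge 1$, the Diophantine set $D_{\gamma,\tau}$ is the set of all real numbers $\xi$ such that $|\xi q-p|\ge \gamma/q^{\tau}$ for all $p\in\mathbb{Z}$ and all $q\in\mathbb{N}=\{1,2,3,\dots\}$. Continued fraction expansions use the standard conventions: $a_0\in\mathbb{Z}$, $a_i\in\mathbb{N}$ for $i\ge1$, $p_{-1}=1$, $q_{-1}=0$, $p_0=a_0$, $q_0=1$, and $p_{k+1}=a_{k+1}p_k+p_{k-1}$, $q_{k+1}=a_{k+1}q_k+q_{k-1}$. *)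

From Stdlib Require Import Reals ZArith.
Open Scope R_scope.

Definition irrational (xi : R) : Prop :=
  forall (p : Z) (q : nat), (1 <= q)%nat -> xi <> IZR p / INR q.

(* Diophantine set D_{gamma,tau}: |xi q - p| >= gamma / q^tau for all p in Z, q in N = {1,2,...}.
   q^tau with real exponent tau is Rpower (INR q) tau (q >= 1 > 0). *)
Definition Diophantine (gamma tau xi : R) : Prop :=
  forall (p : Z) (q : nat), (1 <= q)%nat ->
    Rabs (xi * INR q - IZR p) >= gamma / Rpower (INR q) tau.

Definition floorR (x : R) : Z := Int_part x.

(* Complete quotients a'_k = [a_k; a_{k+1}, ...] of xi (for irrational xi):
   a'_0 = xi, a'_{k+1} = 1 / (a'_k - floor a'_k). *)
Fixpoint cq (xi : R) (k : nat) : R :=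
  match k with
  | O => xi
  | S k' => / (cq xi k' - IZR (floorR (cq xi k')))
  end.

Definition pq_a (xi : R) (k : nat) : Z := floorR (cq xi k).

(* Convergent numerators/denominators with the standard recurrence:
   p_{-1}=1, q_{-1}=0, p_0=a_0, q_0=1,
   p_{k+1} = a_{k+1} p_k + p_{k-1},  q_{k+1} = a_{k+1} q_k + q_{k-1}.
   conv xi k = ((p_{k-1}, q_{k-1}), (p_k, q_k)). *)
Fixpoint conv (xi : R) (k : nat) : (Z * Z) * (Z * Z) :=
  match k with
  | O => ((1%Z, 0%Z), (pq_a xi 0, 1%Z))
  | S k' =>
      let '((pm, qm), (pn, qn)) := conv xi k' in
      ((pn, qn), (pq_a xi k * pn + pm, pq_a xi k * qn + qm)%Z)
  end.

Definition cf_p (xi : R) (k : nat) : Z := fst (snd (conv xi k)).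
Definition cf_q (xi : R) (k : nat) : Z := snd (snd (conv xi k)).

From Stdlib Require Import Reals ZArith Lra Lia Psatz.
Open Scope R_scope.

(* The error of the k-th convergent is |xi q_k - p_k| = 1 / (q_{k+1} + q_k / a'_{k+2}),
   so the k-th inequality of the theorem says exactly that (p_k, q_k) obeys the
   Diophantine bound.  Conversely, by Lagrange's best approximation property every
   q with q_k <= q < q_{k+1} approximates xi no better than q_k, while q^tau >= q_k^tau;
   hence the bound at the convergents implies it for all (p, q). *)

Definition cf_p_prev (xi : R) (k : nat) : Z := fst (fst (conv xi k)).
Definition cf_q_prev (xi : R) (k : nat) : Z := snd (fst (conv xi k)).

Lemma cf_p_S (xi : R) (k : nat) :
  cf_p xi (S k) = (pq_a xi (S k) * cf_p xi k + cf_p_prev xi k)%Z.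
Proof. unfold cf_p, cf_p_prev; cbn [conv]; destruct (conv xi k) as [[? ?] [? ?]]; reflexivity. Qed.

Lemma cf_q_S (xi : R) (k : nat) :
  cf_q xi (S k) = (pq_a xi (S k) * cf_q xi k + cf_q_prev xi k)%Z.
Proof. unfold cf_q, cf_q_prev; cbn [conv]; destruct (conv xi k) as [[? ?] [? ?]]; reflexivity. Qed.

Lemma cf_p_prev_S (xi : R) (k : nat) : cf_p_prev xi (S k) = cf_p xi k.
Proof. unfold cf_p, cf_p_prev; cbn [conv]; destruct (conv xi k) as [[? ?] [? ?]]; reflexivity. Qed.

Lemma cf_q_prev_S (xi : R) (k : nat) : cf_q_prev xi (S k) = cf_q xi k.
Proof. unfold cf_q, cf_q_prev; cbn [conv]; destruct (conv xi k) as [[? ?] [? ?]]; reflexivity. Qed.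

Lemma floorR_lt_irrational (x : R) :
  irrational x -> IZR (floorR x) < x < IZR (floorR x) + 1.
Proof.
  intros Hx. destruct (base_Int_part x) as [[Hlt | Heq] Hup]; unfold floorR; [lra |].
  exfalso. apply (Hx (Int_part x) 1%nat (le_n 1)). rewrite Heq. simpl. field.
Qed.

Lemma irrational_cq (xi : R) (k : nat) : irrational xi -> irrational (cq xi k).
Proof.
  intros Hx. induction k as [| k IHk]; [exact Hx |].
  intros p q Hq Heq. simpl in Heq.
  destruct (floorR_lt_irrational _ IHk) as [Hfl Hfu].
  set (n := floorR (cq xi k)) in *. set (f := cq xi k - IZR n) in *.
  assert (HqR : 1 <= INR q) by (apply (le_INR 1); exact Hq).
  assert (Hf : 0 < f) by (unfold f; lra).
  assert (Hpf : IZR p * f = INR q).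
  { replace (IZR p) with (INR q * / f); [field; lra |]. rewrite Heq. field. lra. }
  assert (Hp : (0 < p)%Z) by (apply lt_IZR; nra).
  (* cq xi k = n + f = (n p + q) / p would be rational. *)
  apply (IHk (n * p + Z.of_nat q)%Z (Z.to_nat p)); [lia |].
  rewrite INR_IZR_INZ, Z2Nat.id, plus_IZR, mult_IZR, <- INR_IZR_INZ, <- Hpf by lia.
  unfold f. field. apply not_0_IZR; lia.
Qed.

Lemma cq_S_gt_1 (xi : R) (k : nat) : irrational xi -> 1 < cq xi (S k).
Proof.
  intros Hx. destruct (floorR_lt_irrational _ (irrational_cq xi k Hx)).
  simpl. rewrite <- Rinv_1. apply Rinv_lt_contravar; lra.
Qed.

Lemma pq_a_S_ge_1 (xi : R) (k : nat) : irrational xi -> (1 <= pq_a xi (S k))%Z.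
Proof.
  intros Hx. pose proof (cq_S_gt_1 xi k Hx).
  destruct (base_Int_part (cq xi (S k))) as [_ Hup].
  unfold pq_a, floorR. assert (0 < Int_part (cq xi (S k)))%Z; [apply lt_IZR; lra | lia].
Qed.

Lemma cq_eq (xi : R) (k : nat) : irrational xi -> cq xi k = IZR (pq_a xi k) + / cq xi (S k).
Proof.
  intros Hx. destruct (floorR_lt_irrational _ (irrational_cq xi k Hx)).
  simpl. unfold pq_a. field. lra.
Qed.

Lemma cf_q_pos (xi : R) (k : nat) : irrational xi -> (1 <= cf_q xi k)%Z /\ (0 <= cf_q_prev xi k)%Z.
Proof.
  intros Hx. induction k as [| k IHk]; [split; discriminate |].
  rewrite cf_q_S, cf_q_prev_S. pose proof (pq_a_S_ge_1 xi k Hx). nia.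
Qed.

Lemma cf_q_S_ge_index (xi : R) (k : nat) : irrational xi -> (Z.of_nat (S k) <= cf_q xi (S k))%Z.
Proof.
  intros Hx. induction k as [| k IHk].
  - rewrite cf_q_S. pose proof (pq_a_S_ge_1 xi 0 Hx).
    change (cf_q xi 0) with 1%Z. change (cf_q_prev xi 0) with 0%Z. lia.
  - rewrite cf_q_S, cf_q_prev_S. pose proof (pq_a_S_ge_1 xi (S k) Hx).
    pose proof (cf_q_pos xi k Hx). pose proof (cf_q_pos xi (S k) Hx). nia.
Qed.

Lemma cf_q_bracket (xi : R) (n : Z) : irrational xi -> (1 <= n)%Z ->
  exists k, (cf_q xi k <= n < cf_q xi (S k))%Z.
Proof.
  intros Hx Hn.
  assert (Hsearch : forall m, (n < cf_q xi m)%Z ->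
            exists k, (cf_q xi k <= n < cf_q xi (S k))%Z).
  { induction m as [| m IHm]; intros Hm; [change (cf_q xi 0) with 1%Z in Hm; lia |].
    destruct (Z_lt_le_dec n (cf_q xi m)); [auto | exists m; lia]. }
  apply (Hsearch (S (Z.to_nat n))). pose proof (cf_q_S_ge_index xi (Z.to_nat n) Hx). lia.
Qed.

Definition cf_det (xi : R) (k : nat) : Z :=
  (cf_p xi k * cf_q_prev xi k - cf_p_prev xi k * cf_q xi k)%Z.

Lemma cf_det_S (xi : R) (k : nat) : cf_det xi (S k) = (- cf_det xi k)%Z.
Proof. unfold cf_det. rewrite cf_p_S, cf_q_S, cf_p_prev_S, cf_q_prev_S. ring. Qed.

Lemma cf_det_unit (xi : R) (k : nat) : cf_det xi k = 1%Z \/ cf_det xi k = (-1)%Z.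
Proof. 
  induction k; [right; unfold cf_det, cf_p, cf_q, cf_p_prev, cf_q_prev; cbn [conv fst snd]; ring | rewrite cf_det_S; lia]. Qed.

Lemma xi_mediant (xi : R) (k : nat) : irrational xi ->
  xi * (IZR (cf_q xi k) * cq xi (S k) + IZR (cf_q_prev xi k))
  = IZR (cf_p xi k) * cq xi (S k) + IZR (cf_p_prev xi k).
Proof.
  intros Hx. induction k as [| k IHk].
  - change (cf_q xi 0) with 1%Z. change (cf_q_prev xi 0) with 0%Z.
    change (cf_p xi 0) with (pq_a xi 0). change (cf_p_prev xi 0) with 1%Z.
    pose proof (cq_S_gt_1 xi 0 Hx). pose proof (cq_eq xi 0 Hx) as Hxi.
    change (cq xi 0) with xi in Hxi. rewrite Hxi at 1. field. lra.
  - rewrite cf_p_S, cf_q_S, cf_p_prev_S, cf_q_prev_S, !plus_IZR, !mult_IZR.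
    pose proof (cq_S_gt_1 xi (S k) Hx).
    rewrite (cq_eq xi (S k) Hx) in IHk.
    set (r := cq xi (S (S k))) in *.
    transitivity (r * (xi * (IZR (cf_q xi k) * (IZR (pq_a xi (S k)) + / r)
                             + IZR (cf_q_prev xi k))));
      [field; lra | rewrite IHk; field; lra].
Qed.

Definition cf_err (xi : R) (k : nat) : R := xi * IZR (cf_q xi k) - IZR (cf_p xi k).

Definition cf_denom (xi : R) (k : nat) : R :=
  IZR (cf_q xi k) * cq xi (S k) + IZR (cf_q_prev xi k).

Lemma cf_denom_pos (xi : R) (k : nat) : irrational xi -> 0 < cf_denom xi k.
Proof.
  intros Hx. unfold cf_denom. destruct (cf_q_pos xi k Hx) as [Hq Hqp].
  apply IZR_le in Hq. apply IZR_le in Hqp. pose proof (cq_S_gt_1 xi k Hx). nra.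
Qed.

Lemma cf_denom_eq (xi : R) (k : nat) : irrational xi ->
  cf_denom xi k = IZR (cf_q xi (S k)) + IZR (cf_q xi k) / cq xi (S (S k)).
Proof.
  intros Hx. unfold cf_denom. rewrite cf_q_S, plus_IZR, mult_IZR, (cq_eq xi (S k) Hx).
  pose proof (cq_S_gt_1 xi (S k) Hx). field. lra.
Qed.

Lemma cf_err_mul_denom (xi : R) (k : nat) : irrational xi ->
  cf_err xi k * cf_denom xi k = - IZR (cf_det xi k).
Proof.
  intros Hx. unfold cf_err, cf_denom, cf_det. rewrite minus_IZR, !mult_IZR.
  transitivity (IZR (cf_q xi k) * (xi * (IZR (cf_q xi k) * cq xi (S k) + IZR (cf_q_prev xi k)))
                - IZR (cf_p xi k) * (IZR (cf_q xi k) * cq xi (S k) + IZR (cf_q_prev xi k)));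
    [ring | rewrite xi_mediant by exact Hx; ring].
Qed.

Lemma Rabs_cf_err (xi : R) (k : nat) : irrational xi -> Rabs (cf_err xi k) = / cf_denom xi k.
Proof.
  intros Hx. pose proof (cf_denom_pos xi k Hx).
  replace (cf_err xi k) with (- IZR (cf_det xi k) / cf_denom xi k)
    by (rewrite <- cf_err_mul_denom by exact Hx; field; lra).
  unfold Rdiv. rewrite Rabs_mult, Rabs_Ropp, Rabs_inv, (Rabs_pos_eq (cf_denom xi k)) by lra.
  rewrite Rabs_Zabs. destruct (cf_det_unit xi k) as [-> | ->]; simpl; ring.
Qed.

Lemma cf_err_alternate (xi : R) (k : nat) : irrational xi -> cf_err xi k * cf_err xi (S k) < 0.
Proof.
  intros Hx. pose proof (cf_denom_pos xi k Hx). pose proof (cf_denom_pos xi (S k) Hx).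
  assert (Hprod : cf_err xi k * cf_err xi (S k) * (cf_denom xi k * cf_denom xi (S k)) = -1).
  { transitivity ((cf_err xi k * cf_denom xi k) * (cf_err xi (S k) * cf_denom xi (S k)));
      [ring |].
    rewrite !cf_err_mul_denom, cf_det_S, opp_IZR by exact Hx.
    destruct (cf_det_unit xi k) as [-> | ->]; simpl; ring. }
  assert (0 < cf_denom xi k * cf_denom xi (S k)) by nra.
  nra.
Qed.

Lemma Rabs_le_Rabs_add (x y : R) : 0 < x * y -> Rabs x <= Rabs (x + y).
Proof.
  intros H. destruct (Rcase_abs x), (Rcase_abs y), (Rcase_abs (x + y));
    rewrite ?Rabs_left, ?Rabs_right by lra; nra.
Qed.

(* Consecutive convergents form a basis of Z^2, since their determinant is a unit. *)
Lemma cf_coords (xi : R) (k : nat) (p q : Z) : exists u v : Z,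
  q = (u * cf_q xi k + v * cf_q xi (S k))%Z /\ p = (u * cf_p xi k + v * cf_p xi (S k))%Z.
Proof.
  set (d := cf_det xi (S k)).
  assert (Hd : d = (cf_p xi (S k) * cf_q xi k - cf_p xi k * cf_q xi (S k))%Z)
    by (unfold d, cf_det; rewrite cf_p_prev_S, cf_q_prev_S; reflexivity).
  assert (Hdd : (d * d = 1)%Z) by (unfold d; destruct (cf_det_unit xi (S k)) as [-> | ->]; reflexivity).
  exists (d * (q * cf_p xi (S k) - p * cf_q xi (S k)))%Z, (d * (p * cf_q xi k - q * cf_p xi k))%Z.
  split; [transitivity (q * (d * d))%Z | transitivity (p * (d * d))%Z];
    solve [rewrite Hdd; ring | rewrite Hd at 2; ring].
Qed.

Lemma cf_err_best_approx (xi : R) (k : nat) (p q : Z) :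
  irrational xi -> (1 <= q)%Z -> (q < cf_q xi (S k))%Z ->
  Rabs (cf_err xi k) <= Rabs (xi * IZR q - IZR p).
Proof.
  intros Hx Hq1 Hq2.
  destruct (cf_coords xi k p q) as [u [v [Hq Hp]]].
  assert (Hsplit : xi * IZR q - IZR p = IZR u * cf_err xi k + IZR v * cf_err xi (S k))
    by (rewrite Hq, Hp; unfold cf_err; rewrite !plus_IZR, !mult_IZR; ring).
  rewrite Hsplit.
  destruct (cf_q_pos xi k Hx) as [Hqk _].
  assert (Hu : u <> 0%Z).
  { intros ->. destruct (Z_le_gt_dec v 0); nia. }
  assert (Hue : Rabs (cf_err xi k) <= Rabs (IZR u * cf_err xi k)).
  { rewrite Rabs_mult, Rabs_Zabs.
    assert (1 <= IZR (Z.abs u)) by (apply IZR_le; lia).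
    pose proof (Rabs_pos (cf_err xi k)). nra. }
  destruct (Z.eq_dec v 0) as [-> | Hv]; [rewrite Rmult_0_l, Rplus_0_r; exact Hue |].
  (* 1 <= q < q_{k+1} forces u and v to have opposite signs, and so do the errors. *)
  assert (Huv : IZR u * IZR v < 0) by (rewrite <- mult_IZR; apply IZR_lt; nia).
  pose proof (cf_err_alternate xi k Hx).
  apply (Rle_trans _ _ _ Hue), Rabs_le_Rabs_add.
  replace (IZR u * cf_err xi k * (IZR v * cf_err xi (S k)))
    with ((IZR u * IZR v) * (cf_err xi k * cf_err xi (S k))) by ring.
  nra.
Qed.

Lemma Rpower_pos (x y : R) : 0 < Rpower x y.
Proof. apply exp_pos. Qed.

Lemma Diophantine_iff_convergents (gamma tau xi : R) :
  0 <= gamma -> 0 <= tau -> irrational xi ->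
  Diophantine gamma tau xi <->
  forall k, gamma / Rpower (IZR (cf_q xi k)) tau <= Rabs (cf_err xi k).
Proof.
  intros Hg Ht Hx. split.
  - intros HD k. destruct (cf_q_pos xi k Hx) as [Hq _].
    specialize (HD (cf_p xi k) (Z.to_nat (cf_q xi k)) ltac:(lia)).
    rewrite INR_IZR_INZ, Z2Nat.id in HD by lia. apply Rge_le, HD.
  - intros HC p q Hq. apply Rle_ge.
    destruct (cf_q_bracket xi (Z.of_nat q) Hx) as [k [Hk1 Hk2]]; [lia |].
    pose proof (cf_err_best_approx xi k p (Z.of_nat q) Hx ltac:(lia) Hk2) as Hbest.
    rewrite <- INR_IZR_INZ in Hbest.
    apply IZR_le in Hk1. rewrite <- INR_IZR_INZ in Hk1.
    destruct (cf_q_pos xi k Hx) as [Hqk _]. apply IZR_le in Hqk.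
    refine (Rle_trans _ _ _ (Rle_trans _ _ _ _ (HC k)) Hbest).
    apply Rmult_le_compat_l; [exact Hg |].
    apply Rinv_le_contravar; [apply Rpower_pos | apply Rle_Rpower_l; lra].
Qed.

Lemma cf_condition_eq (xi tau : R) (k : nat) : irrational xi ->
  IZR (cf_q xi (S k)) / Rpower (IZR (cf_q xi k)) tau
  + 1 / (cq xi (S (S k)) * Rpower (IZR (cf_q xi k)) (tau - 1))
  = cf_denom xi k / Rpower (IZR (cf_q xi k)) tau.
Proof.
  intros Hx. rewrite cf_denom_eq by exact Hx.
  destruct (cf_q_pos xi k Hx) as [Hq _]. apply IZR_le in Hq.
  pose proof (cq_S_gt_1 xi (S k) Hx). pose proof (Rpower_pos (IZR (cf_q xi k)) (tau - 1)).
  replace (Rpower (IZR (cf_q xi k)) tau)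
    with (Rpower (IZR (cf_q xi k)) (tau - 1) * IZR (cf_q xi k))
    by (rewrite <- (Rpower_1 (IZR (cf_q xi k))) at 2 by lra;
        rewrite <- Rpower_plus; f_equal; ring).
  field. lra.
Qed.

Lemma Rdiv_le_inv_iff (a b c : R) : 0 < b -> 0 < c -> a / b <= / c <-> a * c <= b.
Proof.
  intros Hb Hc.
  replace (a / b) with (a * c * / (b * c)) by (field; lra).
  replace (/ c) with (b * / (b * c)) by (field; lra).
  assert (Hbc : 0 < / (b * c)) by (apply Rinv_0_lt_compat; nra).
  split; intro H; [apply Rmult_le_reg_r with (/ (b * c)) | apply Rmult_le_compat_r]; lra.
Qed.

Theorem mainTheorem2 (gamma tau xi : R) :
  0 < gamma -> 1 <= tau -> irrational xi ->
  (Diophantine gamma tau xi <->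
   forall k : nat,
     IZR (cf_q xi (S k)) / Rpower (IZR (cf_q xi k)) tau
     + 1 / (cq xi (S (S k)) * Rpower (IZR (cf_q xi k)) (tau - 1))
     <= 1 / gamma).
Proof.
  intros Hg Ht Hx.
  rewrite (Diophantine_iff_convergents gamma tau xi) by (lra || exact Hx).
  assert (Hk : forall k, gamma / Rpower (IZR (cf_q xi k)) tau <= / cf_denom xi k
                         <-> cf_denom xi k / Rpower (IZR (cf_q xi k)) tau <= 1 / gamma).
  { intro k. pose proof (cf_denom_pos xi k Hx). pose proof (Rpower_pos (IZR (cf_q xi k)) tau).
    unfold Rdiv at 3. rewrite Rmult_1_l, !Rdiv_le_inv_iff, Rmult_comm by lra.
    reflexivity. }
  split; intros H k; specialize (H k);
    rewrite cf_condition_eq, Rabs_cf_err in * by exact Hx; apply Hk, H.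
Qed.
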